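(* Let $d,r\ge2$. The map $\mathsf v_{d,r}(\mathbf u,\mathbf w)=(\mathbf w,\mathbf u+\langle\mathbf 1,\mathbf w\rangle\mathbf 1)$ restricts to a bijection $\mathbb M_{d,r}\to T_{r,d}$. Define $V:\mathcal M_{d,r}\to\mathrm{Sp}(\mathcal M_{r,d})$ by $V(\mathbf u,\mathbf w)=f_{\mathsf v_{d,r}(\mathbf u,\mathbf w)}$, and $W:\mathcal M_{r,d}\to\mathrm{Sp}(\mathcal M_{d,r})$ by $W(\mathbf y,\mathbf z)=f_{\mathsf v_{r,d}(\mathbf y,\mathbf z)}$ (using the identifications of elements with $\mathbb M_{d,r},\mathbb M_{r,d}$ and of points with $T_{d,r},T_{r,d}$). Then $V$ and $W$ are bijections, $V(m)(n)=W(n)(m)$ for all $m\in\mathcal M_{d,r}$, $n\in\mathcal M_{r,d}$ (explicitly, both equal $\langle\mathbf w,\mathbf y\rangle+\langle\mathbf u,\mathbf z\rangle+\langle\mathbf 1,\mathbf z\rangle\langle\mathbf 1,\mathbf w\rangle$ for $m=(\mathbf u,\mathbf w)$, $n=(\mathbf y,\mathbf z)$), and for each $k\in[d]$, $V^{-1}(\mathrm{Sp}(\mathcal M_{r,d},k))=\{(\mathbf u,\mathbf w)\in\mathbb M_{d,r}:u_k=0\}$, which is the set of elements of the maximal cone $\{u_k=\min_ju_j\}$ of $\Sigma(\mathcal M_{d,r})$ (in chart $M^{(1)}_{d,r}$); symmetrically for $W$. Hence $\mathcal M_{d,r}$ and $\mathcal M_{r,d}$ form a strict dual $\mathbb Z$-pair;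 in particular $\mathcal M_{d,d}$ is strictly self-dual.
   Context: The polyptych lattice $\mathcal M_{d,r}$ over $\mathbb Z$ (rank $d+r-1$): coordinates $(\mathbf u,\mathbf w)\in\mathbb Z^d\times\mathbb Z^r$; charts $M^{(i)}_{d,r}=\{(\mathbf u,\mathbf w):w_i=0\}$, $i\in[r]$; mutations $\mu_{i,i+1}(\mathbf u,\mathbf w)=(\mathbf u,w_1,\dots,w_{i-1},\min_ju_j-\sum_kw_k,0,w_{i+2},\dots,w_r)$, all others by composition/inversion. Elements of a polyptych lattice are classes of the disjoint union of charts under $m\sim\mu(m)$; its PL fan $\Sigma$ is the coarsest complete fan of cones on whose chart images all mutations are linear; for $\mathcal M_{d,r}$ its maximal cones are $\{u_k=\min\{u_1,\dots,u_d\}\}$, $k\in[d]$, in every chart. Points of a polyptych lattice with charts $M_\alpha$: $p$ with $p(m)+p(m')=\min_\alpha p(\pi_\alpha^{-1}(\pi_\alpha m+\pi_\alpha m'))$ and $p(\lambda m)=\lambda p(m)$; $\mathrm{Sp}(\mathcal M,\alpha)$ are those linear on chart $\alpha$. $\mathbf 1$ denotes the all-ones vector of the appropriate length; $\mathbb M_{d,r}=\{(\mathbf u,\mathbf w)\in\mathbb Z^d\times\mathbb Z^r:\min_ju_j=0\}$ is identified with the elements of $\mathcal M_{d,r}$ via $(\mathbf u,\mathbf w)\mapsto(\varphi_i(\mathbf u,\mathbf w))_i$, $\varphi_i(\mathbf u,\mathbf w)=(\mathbf u+\langle\mathbf 1,\mathbf w\rangle\mathbf 1,\mathbf w)$ with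 $i$-th $\mathbf w$-coordinate set to $0$. $T_{d,r}=\{(\mathbf a,\mathbf b)\in\mathbb Z^d\times\mathbb Z^r:\sum a_j=\min_ib_i\}$; $(\mathbf a,\mathbf b)\mapsto f_{\mathbf a,\mathbf b}$, $f_{\mathbf a,\mathbf b}(\mathbf u,\mathbf w)=\langle\mathbf a,\mathbf u\rangle+\langle\mathbf b,\mathbf w\rangle$ on $\mathbb M_{d,r}$, identifies $T_{d,r}$ with $\mathrm{Sp}(\mathcal M_{d,r})$, and $T_{d,r}(i)=\{\sum a_j=b_i\}$ with $\mathrm{Sp}(\mathcal M_{d,r},i)$. $\mathcal M_{r,d},\mathbb M_{r,d},T_{r,d},\mathsf v_{r,d}$ are defined the same way with $d,r$ swapped (coordinates $(\mathbf y,\mathbf z)\in\mathbb Z^r\times\mathbb Z^d$). A strict dual $\mathbb Z$-pair consists of maps $V:\mathcal M\to\mathrm{Sp}(\mathcal N)$, $W:\mathcal N\to\mathrm{Sp}(\mathcal M)$ that are bijections, satisfy $V(m)(n)=W(n)(m)$, and such that the preimages of the sets $\mathrm{Sp}(\cdot,\gamma)$ are exactly the maximal cones of the PL fan (on both sides). *)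

From HB Require Import structures.
From mathcomp Require Import all_boot all_order all_algebra.
Set Implicit Arguments. Unset Strict Implicit. Unset Printing Implicit Defensive.
Import Order.TTheory GRing.Theory Num.Theory.
Local Open Scope ring_scope.

Definition Elt (d r : nat) := ({ffun 'I_d -> int} * {ffun 'I_r -> int})%type.

Definition sum1 n (x : {ffun 'I_n -> int}) : int := \sum_(j < n) x j.

Definition is_min n (x : {ffun 'I_n -> int}) (c : int) : bool :=
  [forall j, c <= x j] && [exists j, x j == c].

(* bold M_{d,r} = {(u,w) : min_j u_j = 0}, identified with the elements of M_{d,r} *)
Definition inM d r (m : Elt d r) : bool := is_min m.1 0.
Definition Melt d r := {m : Elt d r | inM m}.

Definition inT d r (t : Elt d r) : bool := is_min t.2 (sum1 t.1).
Definition inT_chart d r (i : 'I_r) (t : Elt d r) : bool := (sum1 t.1 == t.2 i) && inT t.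

Definition fab d r (t m : Elt d r) : int :=
  \sum_(j < d) t.1 j * m.1 j + \sum_(i < r) t.2 i * m.2 i.

Definition phi d r (i : 'I_r) (m : Elt d r) : Elt d r :=
  ([ffun j => m.1 j + sum1 m.2], [ffun k => if k == i then 0 else m.2 k]).

(* maximal cone {u_k = min_j u_j} of the PL fan, inside chart i *)
Definition in_cone d r (i : 'I_r) (k : 'I_d) (x : Elt d r) : bool :=
  (x.2 i == 0) && [forall j, x.1 k <= x.1 j].

(* Points of M_{d,r}: via the identification with T_{d,r}, the functions
   f_{a,b} on the elements, (a,b) in T_{d,r}. *)
Definition Pt d r := Melt d r -> int.
Definition Sp d r (p : Pt d r) : Prop :=
  exists2 t : Elt d r, inT t & forall m : Melt d r, p m = fab t (val m).

(* Sp(M, i): points which are linear on chart i, i.e. whose pull-back to the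
   chart lattice M^{(i)} is the restriction of a linear form on Z^d x Z^r. *)
Definition Sp_chart d r (i : 'I_r) (p : Pt d r) : Prop :=
  Sp p /\ exists c : Elt d r, forall m : Melt d r, p m = fab c (phi i (val m)).

Definition vmap d r (m : Elt d r) : Elt r d :=
  (m.2, [ffun j => m.1 j + sum1 m.2]).

Definition Vmap d r (m : Melt d r) : Pt r d := fun n => fab (vmap (val m)) (val n).

(* Elements of the maximal cone {u_k = min_j u_j} of the PL fan Sigma(M_{d,r}):
   those whose image in (every) chart lies in that cone. *)
Definition cone_elt d r (k : 'I_d) (m : Elt d r) : Prop :=
  forall i : 'I_r, in_cone i k (phi i m).

Local Close Scope ring_scope.

Definition strict_dual_pair d r (V : Melt d r -> Pt r d) (W : Melt r d -> Pt d r) : Prop :=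
  [/\ ((forall m, Sp (V m)) /\ injective V /\ (forall p, Sp p -> exists m, V m = p)),
      ((forall n, Sp (W n)) /\ injective W /\ (forall p, Sp p -> exists n, W n = p)),
      (forall m n, V m n = W n m),
      (forall g : 'I_d, exists k : 'I_d, forall m : Melt d r,
           Sp_chart g (V m) <-> cone_elt k (val m)) /\
      (forall k : 'I_d, exists g : 'I_d, forall m : Melt d r,
           Sp_chart g (V m) <-> cone_elt k (val m))
    & (forall g : 'I_r, exists k : 'I_r, forall n : Melt r d,
           Sp_chart g (W n) <-> cone_elt k (val n)) /\
      (forall k : 'I_r, exists g : 'I_r, forall n : Melt r d,
           Sp_chart g (W n) <-> cone_elt k (val n))].

From mathcomp Require Import all_boot all_order all_algebra.
From mathcomp Require Import ring.
From Stdlib Require Import FunctionalExtensionality.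
Import Order.TTheory GRing.Theory Num.Theory.
Set Implicit Arguments. Unset Strict Implicit. Unset Printing Implicit Defensive.
Local Open Scope ring_scope.

(** The pairing [f_{v(u,w)}(y,z) = <w,y> + <u,z> + <1,z><1,w>] is symmetric
   under swapping [(u,w)] with [(y,z)], which gives [V(m)(n) = W(n)(m)].
   Translating [u] by [<1,w>] turns [min_j u_j = 0] into
   [min_j (u_j + <1,w>) = <1,w>], so [v] maps the normalised elements onto
   [T_{r,d}], and points are determined by their values on the elements
   [(e_i, 0)] and [(0, e_k)].  Evaluating a point that is linear on chart [k]
   at these test elements, whose chart images are [(e_i, 0)] and [(1, 0)],
   shows that [V(u,w)] is linear on chart [k] exactly when [u_k = 0], i.e.
   when [u_k] is the minimum of [u]. *)

Section UnitVectors.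
Variable n : nat.

Definition unitf (k : 'I_n) : {ffun 'I_n -> int} := [ffun i => (i == k)%:R].

Lemma sum_mul_unitf (f : 'I_n -> int) (k : 'I_n) :
  \sum_(i < n) f i * unitf k i = f k.
Proof.
rewrite (bigD1 k) //= ffunE eqxx mulr1 big1 ?addr0 // => i /negbTE ik.
by rewrite ffunE ik mulr0.
Qed.

Lemma sum_mul0 (f : 'I_n -> int) : \sum_(i < n) f i * (0 : {ffun 'I_n -> int}) i = 0.
Proof. by rewrite big1 // => i _; rewrite ffunE mulr0. Qed.

Lemma sum1_unitf (k : 'I_n) : sum1 (unitf k) = 1.
Proof.
by rewrite /sum1 -(sum_mul_unitf (fun _ => 1) k); apply: eq_bigr => i _; rewrite mul1r.
Qed.

Lemma sum1_0 : sum1 (0 : {ffun 'I_n -> int}) = 0.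
Proof. by rewrite /sum1 big1 // => i _; rewrite ffunE. Qed.

Lemma is_min_shift (x : {ffun 'I_n -> int}) (c : int) :
  is_min [ffun j => x j + c] c = is_min x 0.
Proof.
rewrite /is_min; congr andb.
  by apply: eq_forallb => j; rewrite ffunE lerDr.
by apply: eq_existsb => j; rewrite ffunE -{2}(add0r c) (inj_eq (addIr c)).
Qed.

Lemma exists_neq_ord (n_gt1 : (1 < n)%N) (i : 'I_n) : exists j : 'I_n, j != i.
Proof.
have n_gt0 : (0 < n)%N by apply: ltn_trans n_gt1.
have [<-|ne] := eqVneq (Ordinal n_gt0) i; last by exists (Ordinal n_gt0).
by exists (Ordinal n_gt1); apply/eqP => /(congr1 val).
Qed.

End UnitVectors.

Lemma fab_vmap d r (m : Elt d r) (n : Elt r d) :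
  fab (vmap m) n = \sum_(i < r) m.2 i * n.1 i + \sum_(j < d) m.1 j * n.2 j
                   + sum1 n.2 * sum1 m.2.
Proof.
rewrite /fab /vmap /=.
under [X in _ + X]eq_bigr => j _ do rewrite ffunE mulrDl.
by rewrite big_split /= -mulr_sumr addrA [sum1 _ * _]mulrC.
Qed.

Lemma fab_vmapC d r (m : Elt d r) (n : Elt r d) : fab (vmap m) n = fab (vmap n) m.
Proof.
rewrite !fab_vmap [sum1 n.2 * _]mulrC [X in _ = X + _]addrC.
by congr (_ + _ + _); apply: eq_bigr => i _; rewrite mulrC.
Qed.

Section Duality.
Variables d r : nat.

Lemma vmap_inT (m : Elt d r) : inM m -> inT (vmap m).
Proof. by rewrite /inM /inT /vmap /= is_min_shift. Qed.

Lemma vmap_inj : {in [pred m : Elt d r | inM m] &, injective (@vmap d r)}.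
Proof.
move=> [u w] [u' w'] _ _ [<- /ffunP u_eq]; congr pair.
by apply/ffunP => j; have := u_eq j; rewrite !ffunE => /addIr.
Qed.

Lemma vmap_surj (t : Elt r d) : inT t -> exists2 m : Elt d r, inM m & vmap m = t.
Proof.
case: t => a b bmin.
have shiftK : [ffun j => [ffun j => b j - sum1 a] j + sum1 a] = b.
  by apply/ffunP => j; rewrite !ffunE subrK.
exists ([ffun j => b j - sum1 a], a); last by rewrite /vmap /= shiftK.
by rewrite /inM /= -(is_min_shift _ (sum1 a)) shiftK.
Qed.

Lemma inM_unit1 (r_gt1 : (1 < r)%N) (i : 'I_r) : inM ((unitf i, 0) : Elt r d).
Proof.
rewrite /inM /is_min /=; apply/andP; split.
  by apply/forallP => j; rewrite ffunE ler0n.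
have [j ji] := exists_neq_ord r_gt1 i.
by apply/existsP; exists j; rewrite ffunE (negbTE ji).
Qed.

Lemma inM_unit2 (r_gt0 : (0 < r)%N) (k : 'I_d) : inM ((0, unitf k) : Elt r d).
Proof.
rewrite /inM /is_min /=; apply/andP; split.
  by apply/forallP => j; rewrite ffunE.
by apply/existsP; exists (Ordinal r_gt0); rewrite ffunE.
Qed.

Lemma fab_unit1 (t : Elt r d) (i : 'I_r) : fab t (unitf i, 0) = t.1 i.
Proof. by rewrite /fab /= sum_mul0 sum_mul_unitf addr0. Qed.

Lemma fab_unit2 (t : Elt r d) (k : 'I_d) : fab t (0, unitf k) = t.2 k.
Proof. by rewrite /fab /= sum_mul0 sum_mul_unitf add0r. Qed.

Lemma fab_inj (r_gt1 : (1 < r)%N) (t t' : Elt r d) :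
  (forall n : Melt r d, fab t (val n) = fab t' (val n)) -> t = t'.
Proof.
have r_gt0 : (0 < r)%N by apply: ltn_trans r_gt1.
case: t t' => [a b] [a' b'] eq_fab; congr pair; apply/ffunP => i.
  by have := eq_fab (exist (@inM _ _) _ (inM_unit1 r_gt1 i)); rewrite /= !fab_unit1.
by have := eq_fab (exist (@inM _ _) _ (inM_unit2 r_gt0 i)); rewrite /= !fab_unit2.
Qed.

Lemma phi_unit1 (k : 'I_d) (i : 'I_r) :
  phi k ((unitf i, 0) : Elt r d) = (unitf i, 0).
Proof.
by congr pair; apply/ffunP => j; rewrite !ffunE ?sum1_0 ?addr0 //; case: ifP.
Qed.

Lemma phi_unit2 (k : 'I_d) : phi k ((0, unitf k) : Elt r d) = ([ffun => 1], 0).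
Proof.
congr pair; apply/ffunP => j; first by rewrite !ffunE sum1_unitf add0r.
by rewrite !ffunE; case: eqVneq => // /negbTE ->.
Qed.

Lemma Vmap_Sp (m : Melt d r) : Sp (Vmap m).
Proof. by exists (vmap (val m)); first exact/vmap_inT/valP. Qed.

Lemma Vmap_inj (r_gt1 : (1 < r)%N) : injective (@Vmap d r).
Proof.
move=> m1 m2 eqV; apply/val_inj/vmap_inj; rewrite ?inE ?(valP m1) ?(valP m2) //.
by apply: (fab_inj r_gt1) => n; have := congr1 (fun p => p n) eqV.
Qed.

Lemma Vmap_surj (p : Pt r d) : Sp p -> exists m, Vmap m = p.
Proof.
move=> [t /vmap_surj[m mM <-] pE].
by exists (exist (@inM _ _) m mM); apply: functional_extensionality => n; rewrite pE.
Qed.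

(* The linear form on chart [k] is [(w, u)]: the term [u_k z_k] lost by
   zeroing [z_k] in the chart vanishes because [u_k = 0]. *)
Lemma Vmap_linear_chart (k : 'I_d) (m : Melt d r) :
  (val m).1 k = 0 -> exists c : Elt r d, forall n, Vmap m n = fab c (phi k (val n)).
Proof.
case: m => [[u w] mM] /= uk0; exists (w, u) => -[[y z] nM].
rewrite /Vmap fab_vmap /fab /=.
under [X in _ = X + _]eq_bigr => j _ do rewrite ffunE mulrDr.
have -> : \sum_(j < d) u j * [ffun j => if j == k then 0 else z j] j
          = \sum_(j < d) u j * z j.
  by apply: eq_bigr => j _; rewrite ffunE; case: eqP => // ->; rewrite uk0 !mul0r.
rewrite big_split /= -mulr_suml /sum1; ring.
Qed.

Lemma Vmap_chart_coord0 (r_gt1 : (1 < r)%N) (k : 'I_d) (m : Melt d r)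
    (c : Elt r d) :
  (forall n, Vmap m n = fab c (phi k (val n))) -> (val m).1 k = 0.
Proof.
have r_gt0 : (0 < r)%N by apply: ltn_trans r_gt1.
case: m => [[u w] /= mM] Vc.
have c1E i : c.1 i = w i.
  have := Vc (exist (@inM _ _) _ (inM_unit1 r_gt1 i)).
  by rewrite /Vmap /= phi_unit1 !fab_unit1.
have := Vc (exist (@inM _ _) _ (inM_unit2 r_gt0 k)).
rewrite /Vmap /= phi_unit2 fab_unit2 /fab /= sum_mul0 addr0 ffunE.
under eq_bigr => j _ do rewrite ffunE mulr1 c1E.
by rewrite -[RHS]add0r => /addIr.
Qed.

Lemma Vmap_chart (r_gt1 : (1 < r)%N) (k : 'I_d) (m : Melt d r) :
  Sp_chart k (Vmap m) <-> (val m).1 k = 0.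
Proof.
split; first by move=> [_ [c]]; apply: Vmap_chart_coord0.
by move=> /Vmap_linear_chart cE; split; first exact: Vmap_Sp.
Qed.

Lemma coord0_cone (r_gt0 : (0 < r)%N) (k : 'I_d) (m : Melt d r) :
  (val m).1 k = 0 <-> cone_elt k (val m).
Proof.
case: m => [[u w] /=]; rewrite /inM /is_min /= => /andP[/forallP u_ge0].
move=> /existsP[j0 /eqP uj0]; split.
  move=> uk0 i; rewrite /in_cone /phi /= ffunE eqxx /=.
  by apply/forallP => j; rewrite !ffunE lerD2r uk0.
move=> /(_ (Ordinal r_gt0)) /andP[_ /forallP/(_ j0)].
by rewrite !ffunE lerD2r uj0 => uk_le0; apply/le_anti; rewrite uk_le0 u_ge0.
Qed.

Lemma Vmap_bij (r_gt1 : (1 < r)%N) :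
  (forall m : Melt d r, Sp (Vmap m)) /\ injective (@Vmap d r) /\
  (forall p : Pt r d, Sp p -> exists m, Vmap m = p).
Proof. by split; [exact: Vmap_Sp | split; [exact: Vmap_inj | exact: Vmap_surj]]. Qed.

Lemma Vmap_chart_cone (r_gt1 : (1 < r)%N) (k : 'I_d) (m : Melt d r) :
  Sp_chart k (Vmap m) <-> cone_elt k (val m).
Proof. by rewrite (Vmap_chart r_gt1); apply/coord0_cone/ltnW. Qed.

End Duality.

Theorem mainTheorem17 (d r : nat) (hd : (2 <= d)%N) (hr : (2 <= r)%N) :
  [/\ (forall m : Elt d r, inM m -> inT (vmap m)) /\
      {in [pred m : Elt d r | inM m] &, injective (@vmap d r)} /\
      (forall t : Elt r d, inT t -> exists2 m : Elt d r, inM m & vmap m = t),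
      ((forall m : Melt d r, Sp (Vmap m)) /\ injective (@Vmap d r) /\
       (forall p : Pt r d, Sp p -> exists m, Vmap m = p)) /\
      ((forall n : Melt r d, Sp (Vmap n)) /\ injective (@Vmap r d) /\
       (forall p : Pt d r, Sp p -> exists n, Vmap n = p)),
      (forall (m : Melt d r) (n : Melt r d),
         Vmap m n = Vmap n m /\
         Vmap m n = \sum_(i < r) (val m).2 i * (val n).1 i
                    + \sum_(j < d) (val m).1 j * (val n).2 j
                    + sum1 (val n).2 * sum1 (val m).2)%R,
      (forall (k : 'I_d) (m : Melt d r),
         (Sp_chart k (Vmap m) <-> (val m).1 k = 0%R) /\
         ((val m).1 k = 0%R <-> cone_elt k (val m))) /\
      (forall (k : 'I_r) (n : Melt r d),
         (Sp_chart k (Vmap n) <-> (val n).1 k = 0%R) /\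
         ((val n).1 k = 0%R <-> cone_elt k (val n)))
    & strict_dual_pair (@Vmap d r) (@Vmap r d)].
Proof.
have r_gt0 : (0 < r)%N by apply: ltnW.
have d_gt0 : (0 < d)%N by apply: ltnW.
have Vsym (m : Melt d r) (n : Melt r d) : Vmap m n = Vmap n m by apply: fab_vmapC.
split.
- by split; [exact: vmap_inT | split; [exact: vmap_inj | exact: vmap_surj]].
- by split; apply: Vmap_bij.
- by move=> m n; split; [exact: Vsym | exact: fab_vmap].
- by split=> k m; split; [exact: Vmap_chart | exact: coord0_cone
                        | exact: Vmap_chart | exact: coord0_cone].
- split; [exact: Vmap_bij | exact: Vmap_bij | exact: Vsym | |].
  + by split=> k; exists k; apply: Vmap_chart_cone.
  + by split=> k; exists k; apply: Vmap_chart_cone.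
Qed.
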